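(* Let $n\ge2$, let $T_1,\dots,T_n$ be distinct triangles in $E$, and let $S$ be the set of vertices of $\bigcap_{i=1}^nT_i$. There exists $\epsilon_0>0$ such that for every $0<\epsilon<\epsilon_0$, letting $P$ be the convex hull of all vertices of $T_1^{(1-\epsilon)},\dots,T_n^{(1-\epsilon)}$, for every $S'\subseteq S$ with $|S'|<n$ the pair $(P,S')$ is a YES instance of the intermediate polygon problem, i.e. there is a triangle $T$ with $S'\subseteq T\subseteq P$.
   Context: For $d>0$ let $C_d=\{(x,y)\in\mathbb{R}^2: x^2+y^2\le d\}$, and $C=C_1$. $E$ is the set of all equilateral triangles $T\subseteq C$ whose vertices lie on the boundary of $C$. For $T\in E$, $T^{(1-\epsilon)}$ denotes the scaling of $T$ about the origin such that the vertices of $T^{(1-\epsilon)}$ lie on the boundary of $C_{1-\epsilon}$. An instance of the intermediate polygon problem is a polygon $P\subseteq\mathbb{R}^2$ and a finite point set; it is a YES instance if some triangle $T$ satisfies (point set) $\subseteq T\subseteq P$. *)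

From Stdlib Require Import Reals Lra List.
Open Scope R_scope.

Definition pt : Type := (R * R)%type.

Definition padd (p q : pt) : pt := (fst p + fst q, snd p + snd q).
Definition pscale (t : R) (p : pt) : pt := (t * fst p, t * snd p).
Definition pzero : pt := (0, 0).

Definition sqnorm (p : pt) : R := fst p * fst p + snd p * snd p.
Definition dist2 (p q : pt) : R :=
  (fst p - fst q) * (fst p - fst q) + (snd p - snd q) * (snd p - snd q).

Definition Cd (d : R) (p : pt) : Prop := sqnorm p <= d.
Definition C : pt -> Prop := Cd 1.

Definition convex_comb (l : list (R * pt)) : pt :=
  fold_right (fun wp acc => padd (pscale (fst wp) (snd wp)) acc) pzero l.

Definition conv (A : pt -> Prop) (x : pt) : Prop :=
  exists l : list (R * pt),
    (forall wp, In wp l -> 0 <= fst wp /\ A (snd wp)) /\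
    fold_right (fun wp s => fst wp + s) 0 l = 1 /\
    x = convex_comb l.

Definition conv3 (a b c : pt) : pt -> Prop :=
  conv (fun p => p = a \/ p = b \/ p = c).

Definition vertex (K : pt -> Prop) (x : pt) : Prop :=
  K x /\
  forall y z t, K y -> K z -> 0 < t < 1 ->
    x = padd (pscale t y) (pscale (1 - t) z) -> y = z.

Definition noncollinear (a b c : pt) : Prop :=
  (fst b - fst a) * (snd c - snd a) - (snd b - snd a) * (fst c - fst a) <> 0.

Definition is_triangle (T : pt -> Prop) : Prop :=
  exists a b c, noncollinear a b c /\ forall x, T x <-> conv3 a b c x.

Definition in_E (T : pt -> Prop) : Prop :=
  exists a b c : pt,
    sqnorm a = 1 /\ sqnorm b = 1 /\ sqnorm c = 1 /\
    a <> b /\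
    dist2 a b = dist2 b c /\ dist2 b c = dist2 c a /\
    (forall x, T x <-> conv3 a b c x).

(* Vertices of T^(1-eps): scaling about the origin placing the vertices of T
   on the boundary of C_{1-eps}, i.e. by the factor sqrt(1-eps). *)
Definition scaled_vertex (eps : R) (T : pt -> Prop) (y : pt) : Prop :=
  exists v, vertex T v /\ y = pscale (sqrt (1 - eps)) v.

Definition bigcap (n : nat) (T : nat -> pt -> Prop) (x : pt) : Prop :=
  forall i, (i < n)%nat -> T i x.

Definition hullP (n : nat) (T : nat -> pt -> Prop) (eps : R) : pt -> Prop :=
  conv (fun y => exists i, (i < n)%nat /\ scaled_vertex eps (T i) y).

Definition yes_instance (P : pt -> Prop) (S' : list pt) : Prop :=
  exists T : pt -> Prop, is_triangle T /\
    (forall s, In s S' -> T s) /\ (forall x, T x -> P x).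

(* Each T_i is cut out by the three half-planes [dot x v >= -1/2], v running over its
   vertices, so the intersection K of the T_i is cut out by 3n such constraints.  A vertex
   of K is tight on two independent constraints, hence lies on the boundary of at most two
   of the T_i, and on only one edge of each (otherwise it is a vertex of T_i, which lies
   outside every other T_j).  Since |S'| < n, some T_i meets S' on at most one edge k, so S'
   lies in T_i at a uniform distance δ > 0 from its two other edges.  Shrinking T_i moves
   edge k inwards; pushing the two vertices of the shrunk T_i adjacent to that edge towards
   a shrunk vertex of another T_j lying beyond it brings the edge back onto its original
   line.  For small eps the resulting triangle lies in P, and it contains S' because the
   other two edges moved by less than δ. *)

From Stdlib Require Import Reals List Lra Lia Psatz Classical IndefiniteDescription.
Open Scope R_scope.

Definition dot (p q : pt) : R := fst p * fst q + snd p * snd q.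
Definition det2 (p q : pt) : R := fst p * snd q - snd p * fst q.
Definition lin3 (x y z : R) (a b c : pt) : pt :=
  (x * fst a + y * fst b + z * fst c, x * snd a + y * snd b + z * snd c).

Lemma pt_eq (p q : pt) : fst p = fst q -> snd p = snd q -> p = q.
Proof. destruct p, q; simpl; intros; subst; reflexivity. Qed.

Lemma dot_comm p q : dot p q = dot q p.
Proof. unfold dot; ring. Qed.

Lemma dot_lin3 x y z a b c q :
  dot (lin3 x y z a b c) q = x * dot a q + y * dot b q + z * dot c q.
Proof. unfold dot, lin3; simpl; ring. Qed.

Lemma dot_padd_scale s e h u : dot (padd s (pscale h e)) u = dot s u + h * dot e u.
Proof. unfold dot, padd, pscale; simpl; ring. Qed.

Lemma det2_sqr a b : det2 a b * det2 a b = dot a a * dot b b - dot a b * dot a b.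
Proof. unfold det2, dot; ring. Qed.

Lemma sqr_sum_eq0 x y : x * x + y * y = 0 -> x = 0 /\ y = 0.
Proof. intro H; split; nra. Qed.

Lemma unit_dot_eq1 u v : dot u u = 1 -> dot v v = 1 -> dot u v = 1 -> u = v.
Proof.
  destruct u as [u1 u2], v as [v1 v2]; unfold dot; simpl; intros Hu Hv Huv.
  destruct (sqr_sum_eq0 (u1 - v1) (u2 - v2)) as [E1 E2]; [nra|].
  apply pt_eq; simpl; lra.
Qed.

Lemma unit_dot_bounds u v : dot u u = 1 -> dot v v = 1 -> -1 <= dot u v <= 1.
Proof.
  intros Hu Hv. pose proof (det2_sqr u v) as D. rewrite Hu, Hv in D.
  assert (0 <= det2 u v * det2 u v) by nra. nra.
Qed.

Lemma dot2_inj u v s s' : det2 u v <> 0 ->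
  dot s u = dot s' u -> dot s v = dot s' v -> s = s'.
Proof.
  destruct u as [u1 u2], v as [v1 v2], s as [s1 s2], s' as [t1 t2];
    unfold det2, dot; simpl; intros D E1 E2.
  assert (F1 : (s1 - t1) * (u1 * v2 - u2 * v1) = 0).
  { transitivity (v2 * ((s1 * u1 + s2 * u2) - (t1 * u1 + t2 * u2))
                  - u2 * ((s1 * v1 + s2 * v2) - (t1 * v1 + t2 * v2))); [ring|].
    rewrite E1, E2; ring. }
  assert (F2 : (s2 - t2) * (u1 * v2 - u2 * v1) = 0).
  { transitivity (u1 * ((s1 * v1 + s2 * v2) - (t1 * v1 + t2 * v2))
                  - v1 * ((s1 * u1 + s2 * u2) - (t1 * u1 + t2 * u2))); [ring|].
    rewrite E1, E2; ring. }
  apply Rmult_integral in F1 as [F1|F1]; [|contradiction].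
  apply Rmult_integral in F2 as [F2|F2]; [|contradiction].
  f_equal; lra.
Qed.

Lemma tight_unit_normals u1 u2 w s : det2 u1 u2 <> 0 ->
  dot u1 u1 = 1 -> dot u2 u2 = 1 -> dot w w = 1 ->
  dot s u1 = -1/2 -> dot s u2 = -1/2 -> dot s w = -1/2 -> w = u1 \/ w = u2.
Proof.
  intros D H1 H2 Hw E1 E2 Ew.
  set (m := det2 w u2 / det2 u1 u2). set (k := det2 u1 w / det2 u1 u2).
  assert (Hx : w = (m * fst u1 + k * fst u2, m * snd u1 + k * snd u2)).
  { unfold m, k. destruct w, u1, u2. unfold det2 in *; simpl in *.
    apply pt_eq; simpl; field; auto. }
  clearbody m k.
  assert (Es : dot s w = m * dot s u1 + k * dot s u2)
    by (rewrite Hx; unfold dot; simpl; ring).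
  assert (Ew2 : dot w w = m * m * dot u1 u1 + k * k * dot u2 u2 + 2 * m * k * dot u1 u2)
    by (rewrite Hx; unfold dot; simpl; ring).
  rewrite E1, E2, Ew in Es. rewrite H1, H2, Hw in Ew2.
  assert (G : dot u1 u2 <> 1).
  { intro G. apply D. rewrite (unit_dot_eq1 u1 u2); auto. unfold det2; ring. }
  assert (Z : m * k * (dot u1 u2 - 1) = 0) by nra.
  apply Rmult_integral in Z as [Z|Z]; [|lra].
  apply Rmult_integral in Z as [Z|Z].
  - right. rewrite Hx. assert (k = 1) by lra. subst. apply pt_eq; simpl; ring.
  - left. rewrite Hx. assert (m = 1) by lra. subst. apply pt_eq; simpl; ring.
Qed.

(** * Convex hulls *)

Definition wsum (l : list (R * pt)) : R := fold_right (fun wp s => fst wp + s) 0 l.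

Definition weights_in (A : pt -> Prop) (l : list (R * pt)) : Prop :=
  forall wp, In wp l -> 0 <= fst wp /\ A (snd wp).

Definition rescale (w : R) (l : list (R * pt)) : list (R * pt) :=
  map (fun wp => (w * fst wp, snd wp)) l.

Lemma wsum_app l1 l2 : wsum (l1 ++ l2) = wsum l1 + wsum l2.
Proof. induction l1 as [|[w p] l IH]; unfold wsum in *; simpl; [|rewrite IH]; ring. Qed.

Lemma convex_comb_app l1 l2 :
  convex_comb (l1 ++ l2) = padd (convex_comb l1) (convex_comb l2).
Proof.
  induction l1 as [|[w p] l IH]; simpl; [|rewrite IH];
    apply pt_eq; unfold padd, pscale, pzero; simpl; ring.
Qed.

Lemma wsum_rescale w l : wsum (rescale w l) = w * wsum l.
Proof. induction l as [|[v p] l IH]; unfold wsum in *; simpl; [|rewrite IH]; ring. Qed.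

Lemma convex_comb_rescale w l : convex_comb (rescale w l) = pscale w (convex_comb l).
Proof.
  induction l as [|[v p] l IH]; simpl; [|rewrite IH];
    apply pt_eq; unfold padd, pscale, pzero; simpl; ring.
Qed.

Lemma weights_in_rescale A w l : 0 <= w -> weights_in A l -> weights_in A (rescale w l).
Proof.
  intros Hw Hl wp Hin. unfold rescale in Hin.
  apply in_map_iff in Hin as [[v q] [<- Hin]]. destruct (Hl _ Hin) as [Hv Hq].
  simpl in *. split; [apply Rmult_le_pos|]; auto.
Qed.

Lemma weights_flatten (A B : pt -> Prop) l :
  (forall y, B y -> conv A y) -> weights_in B l ->
  exists l', weights_in A l' /\ wsum l' = wsum l /\ convex_comb l' = convex_comb l.
Proof.
  intro HB. induction l as [|[w p] l IH]; intro Hl.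
  - exists nil. split; [intros ? []|split; reflexivity].
  - destruct IH as [l' [H1 [H2 H3]]]. { intros wp Hw; apply Hl; right; auto. }
    destruct (Hl (w, p)) as [Hw Hp]; [left; auto|]. simpl in Hw, Hp.
    destruct (HB p Hp) as [lp [Hlp [Hsp Hp']]].
    exists (rescale w lp ++ l'). split; [|split].
    + intros wq Hin. apply in_app_or in Hin as [Hin|Hin]; auto.
      apply (weights_in_rescale A w lp Hw Hlp wq Hin).
    + rewrite wsum_app, wsum_rescale, H2. change (wsum lp = 1) in Hsp.
      rewrite Hsp. unfold wsum; simpl; ring.
    + rewrite convex_comb_app, convex_comb_rescale, H3, <- Hp'. reflexivity.
Qed.

Lemma conv_conv (A B : pt -> Prop) x :
  (forall y, B y -> conv A y) -> conv B x -> conv A x.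
Proof.
  intros HB [l [Hl [Hs ->]]].
  destruct (weights_flatten A B l HB Hl) as [l' [H1 [H2 H3]]].
  exists l'. split; [auto|split]; [|auto].
  change (wsum l' = 1). rewrite H2. exact Hs.
Qed.

Lemma conv_segment (A : pt -> Prop) y z t : A y -> A z -> 0 <= t <= 1 ->
  conv A (padd (pscale (1 - t) y) (pscale t z)).
Proof.
  intros Hy Hz Ht. exists ((1 - t, y) :: (t, z) :: nil). split; [|split]; simpl.
  - intros wp [<-|[<-|[]]]; simpl; split; auto; lra.
  - ring.
  - apply pt_eq; unfold padd, pscale, pzero; simpl; ring.
Qed.

Lemma conv_in (A : pt -> Prop) x : A x -> conv A x.
Proof.
  intro H. replace x with (padd (pscale (1 - 0) x) (pscale 0 x))
    by (apply pt_eq; unfold padd, pscale; simpl; ring).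
  apply conv_segment; auto; lra.
Qed.

Lemma convex_comb3 a b c l : weights_in (fun p => p = a \/ p = b \/ p = c) l ->
  exists la lb lc, 0 <= la /\ 0 <= lb /\ 0 <= lc /\ la + lb + lc = wsum l /\
    convex_comb l = lin3 la lb lc a b c.
Proof.
  induction l as [|[w p] l IH]; intro Hl.
  - exists 0, 0, 0. repeat split; try lra; [unfold wsum; simpl; ring|].
    apply pt_eq; unfold lin3, pzero; simpl; ring.
  - destruct IH as [la [lb [lc [H1 [H2 [H3 [H4 H5]]]]]]].
    { intros wp Hw; apply Hl; right; auto. }
    destruct (Hl (w, p)) as [Hw Hp]; [left; auto|]. simpl in Hw, Hp.
    unfold wsum in *; simpl; rewrite H5.
    destruct Hp as [->|[->| ->]];
      [exists (w + la), lb, lc | exists la, (w + lb), lc | exists la, lb, (w + lc)];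
      (repeat split; try lra);
      apply pt_eq; unfold lin3, padd, pscale; simpl; ring.
Qed.

Lemma conv3_bary a b c x : conv3 a b c x <->
  exists la lb lc, 0 <= la /\ 0 <= lb /\ 0 <= lc /\ la + lb + lc = 1 /\
    x = lin3 la lb lc a b c.
Proof.
  split.
  - intros [l [Hl [Hs ->]]].
    destruct (convex_comb3 a b c l Hl) as [la [lb [lc [H1 [H2 [H3 [H4 H5]]]]]]].
    exists la, lb, lc. repeat split; auto. unfold wsum in H4; lra.
  - intros [la [lb [lc [H1 [H2 [H3 [H4 ->]]]]]]].
    exists ((la, a) :: (lb, b) :: (lc, c) :: nil). split; [|split]; simpl.
    + intros wp [<-|[<-|[<-|[]]]]; simpl; auto.
    + lra.
    + apply pt_eq; unfold lin3, padd, pscale, pzero; simpl; ring.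
Qed.

(** * Equilateral frames *)

Definition eqframe (a b c : pt) : Prop :=
  dot a a = 1 /\ dot b b = 1 /\ dot a b = -1/2 /\
  fst a + fst b + fst c = 0 /\ snd a + snd b + snd c = 0.

Definition halfplanes3 (a b c x : pt) : Prop :=
  dot x a >= -1/2 /\ dot x b >= -1/2 /\ dot x c >= -1/2.

Lemma eqframe_dots a b c : eqframe a b c ->
  dot c c = 1 /\ dot a c = -1/2 /\ dot b c = -1/2 /\
  (forall x, dot x a + dot x b + dot x c = 0).
Proof.
  destruct a as [a1 a2], b as [b1 b2], c as [c1 c2]; unfold eqframe, dot; simpl.
  intros [H1 [H2 [H3 [H4 H5]]]].
  replace c1 with (- a1 - b1) by lra. replace c2 with (- a2 - b2) by lra.
  repeat split; try nra. intros [x1 x2]; simpl; ring.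
Qed.

Lemma eqframe_rot a b c : eqframe a b c -> eqframe b c a.
Proof.
  intro F. pose proof (eqframe_dots _ _ _ F) as [Hc [Hac [Hbc _]]].
  destruct F as [H1 [H2 [H3 [H4 H5]]]]. unfold eqframe; repeat split; auto; lra.
Qed.

Lemma eqframe_swap a b c : eqframe a b c -> eqframe b a c.
Proof.
  intros [H1 [H2 [H3 [H4 H5]]]]. unfold eqframe; rewrite (dot_comm b a).
  repeat split; auto; lra.
Qed.

Lemma eqframe_units a b c : eqframe a b c -> dot a a = 1 /\ dot b b = 1 /\ dot c c = 1.
Proof. intro F. pose proof (eqframe_dots _ _ _ F) as [? _]. destruct F as [? [? _]]. auto. Qed.

Lemma eqframe_neq a b c : eqframe a b c -> a <> b.
Proof. intros [H1 [_ [H3 _]]] ->. lra. Qed.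

Lemma eqframe_det a b c : eqframe a b c -> det2 a b <> 0.
Proof.
  intros [H1 [H2 [H3 _]]] E. pose proof (det2_sqr a b) as D.
  rewrite E, H1, H2, H3 in D. lra.
Qed.

(** Barycentric coordinates with respect to an equilateral frame. *)
Lemma eqframe_decomp a b c x : eqframe a b c ->
  x = lin3 ((1 + 2 * dot x a) / 3) ((1 + 2 * dot x b) / 3) ((1 + 2 * dot x c) / 3) a b c.
Proof.
  intro F. pose proof (eqframe_det _ _ _ F) as D.
  pose proof (eqframe_dots _ _ _ F) as [_ [_ [_ Hs]]].
  destruct F as [H1 [H2 [H3 [H4 H5]]]].
  set (m := det2 x b / det2 a b). set (k := det2 a x / det2 a b).
  assert (Hx : x = (m * fst a + k * fst b, m * snd a + k * snd b)).
  { unfold m, k. destruct x, a, b. unfold det2 in *; simpl in *.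
    apply pt_eq; simpl; field; auto. }
  clearbody m k.
  assert (Ea : dot x a = m - k / 2).
  { transitivity (m * dot a a + k * dot a b); [rewrite Hx; unfold dot; simpl; ring|].
    rewrite H1, H3; lra. }
  assert (Eb : dot x b = - m / 2 + k).
  { transitivity (m * dot a b + k * dot b b); [rewrite Hx; unfold dot; simpl; ring|].
    rewrite H2, H3; lra. }
  assert (Ec : dot x c = - dot x a - dot x b) by (specialize (Hs x); lra).
  rewrite Ec, Ea, Eb. rewrite Hx at 1.
  unfold lin3; apply pt_eq; simpl.
  - replace (fst c) with (- fst a - fst b) by lra. field.
  - replace (snd c) with (- snd a - snd b) by lra. field.
Qed.

Lemma conv3_eqframe a b c x : eqframe a b c -> (conv3 a b c x <-> halfplanes3 a b c x).
Proof.
  intro F. pose proof (eqframe_dots _ _ _ F) as [Hc [Hac [Hbc Hs]]].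
  pose proof F as [H1 [H2 [H3 _]]].
  unfold halfplanes3; rewrite conv3_bary. split.
  - intros [la [lb [lc [L1 [L2 [L3 [L4 ->]]]]]]].
    rewrite !dot_lin3, (dot_comm b a), (dot_comm c a), (dot_comm c b).
    rewrite H1, H2, H3, Hc, Hac, Hbc. repeat split; lra.
  - intros [Ha [Hb Hcc]]. specialize (Hs x).
    exists ((1 + 2 * dot x a) / 3), ((1 + 2 * dot x b) / 3), ((1 + 2 * dot x c) / 3).
    repeat split; try lra. apply eqframe_decomp; auto.
Qed.

Lemma eqframe_tight2 a b c s : eqframe a b c ->
  dot s a = -1/2 -> dot s b = -1/2 -> s = c.
Proof.
  intros F Ha Hb. pose proof (eqframe_dots _ _ _ F) as [_ [_ [_ Hs]]].
  specialize (Hs s). rewrite (eqframe_decomp a b c s F), Ha, Hb.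
  replace (dot s c) with 1 by lra.
  apply pt_eq; unfold lin3; simpl; field.
Qed.

Lemma eqframe_tight_unit a b c u : eqframe a b c ->
  dot u u = 1 -> dot u c = -1/2 -> u = a \/ u = b.
Proof.
  intros F Hu Hc. pose proof (eqframe_dots _ _ _ F) as [_ [_ [_ Hs]]].
  pose proof (Hs u) as Hsu. pose proof (eqframe_decomp a b c u F) as D.
  assert (Huu : dot u u = dot (lin3 ((1 + 2 * dot u a) / 3) ((1 + 2 * dot u b) / 3)
                                    ((1 + 2 * dot u c) / 3) a b c) u)
    by (rewrite <- D; reflexivity).
  rewrite dot_lin3, (dot_comm a u), (dot_comm b u), (dot_comm c u), Hc in Huu.
  assert (Hb : dot u b = 1/2 - dot u a) by lra. rewrite Hb in Huu.
  assert (dot u a = 1 \/ dot u a = -1/2) as [E|E] by nra;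
    [left|right]; rewrite D, E, Hb, Hc, E; apply pt_eq; unfold lin3; simpl; field.
Qed.

Lemma unit_in_eqframe_vertex a b c u : eqframe a b c -> dot u u = 1 ->
  halfplanes3 a b c u -> u = a \/ u = b \/ u = c.
Proof.
  intros F Hu [Ya [Yb Yc]].
  pose proof (eqframe_dots _ _ _ F) as [Uc [_ [_ Hs]]]. pose proof (Hs u) as S.
  pose proof F as [Ua [Ub _]].
  assert (Y : dot u u = dot (lin3 ((1 + 2 * dot u a) / 3) ((1 + 2 * dot u b) / 3)
                                  ((1 + 2 * dot u c) / 3) a b c) u)
    by (rewrite <- (eqframe_decomp a b c u F); reflexivity).
  rewrite dot_lin3, Hu, (dot_comm a u), (dot_comm b u), (dot_comm c u) in Y.
  (* [dot u u = 1] makes the pairwise products of the nonnegative slacks sum to 0 *)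
  assert (Zab : (dot u a + 1/2) * (dot u b + 1/2) = 0) by nra.
  assert (Zac : (dot u a + 1/2) * (dot u c + 1/2) = 0) by nra.
  assert (Zbc : (dot u b + 1/2) * (dot u c + 1/2) = 0) by nra.
  apply Rmult_integral in Zab as [Zab|Zab]; apply Rmult_integral in Zac as [Zac|Zac];
    apply Rmult_integral in Zbc as [Zbc|Zbc];
    first [ right; right; apply unit_dot_eq1; auto; lra
          | right; left; apply unit_dot_eq1; auto; lra
          | left; apply unit_dot_eq1; auto; lra ].
Qed.

Lemma eqframe_same_apex a b c d1 d2 : eqframe a b c -> eqframe d1 d2 c ->
  forall x, halfplanes3 a b c x <-> halfplanes3 d1 d2 c x.
Proof.
  intros F G x.
  pose proof (eqframe_dots _ _ _ G) as [_ [H1 [H2 _]]].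
  pose proof (eqframe_units _ _ _ G) as [U1 [U2 _]].
  destruct (eqframe_tight_unit a b c d1 F U1 H1) as [->| ->];
  destruct (eqframe_tight_unit a b c d2 F U2 H2) as [->| ->];
    solve [ destruct (eqframe_neq _ _ _ G); reflexivity | unfold halfplanes3; tauto ].
Qed.

Lemma eqframe_halfplanes_eq a b c d1 d2 d3 : eqframe a b c -> eqframe d1 d2 d3 ->
  halfplanes3 d1 d2 d3 c -> forall x, halfplanes3 a b c x <-> halfplanes3 d1 d2 d3 x.
Proof.
  intros F G Hc x. pose proof (eqframe_units _ _ _ F) as [_ [_ Uc]].
  destruct (unit_in_eqframe_vertex d1 d2 d3 c G Uc Hc) as [->|[->| ->]].
  - rewrite (eqframe_same_apex a b d1 d2 d3 F (eqframe_rot _ _ _ G)).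
    unfold halfplanes3; tauto.
  - rewrite (eqframe_same_apex a b d2 d3 d1 F (eqframe_rot _ _ _ (eqframe_rot _ _ _ G))).
    unfold halfplanes3; tauto.
  - apply eqframe_same_apex; auto.
Qed.

Lemma vertex_eqframe (K : pt -> Prop) a b c : eqframe a b c ->
  (forall x, K x -> halfplanes3 a b c x) -> K a -> vertex K a.
Proof.
  intros F HK Ka. split; auto.
  pose proof (eqframe_dots _ _ _ F) as [_ [_ [_ Hs]]]. pose proof F as [H1 _].
  assert (Le1 : forall y, K y -> dot y a <= 1)
    by (intros y Ky; destruct (HK y Ky) as [_ [? ?]]; specialize (Hs y); lra).
  assert (Eq1 : forall y, K y -> dot y a = 1 -> y = a).
  { intros y Ky E. destruct (HK y Ky) as [_ [Hb Hc]]. pose proof (Hs y).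
    apply unit_dot_eq1; auto.
    rewrite (eqframe_decomp a b c y F) at 1. rewrite dot_lin3, !(dot_comm _ y), E.
    replace (dot y b) with (-1/2) by lra. replace (dot y c) with (-1/2) by lra. field. }
  intros y z t Ky Kz Ht Ha.
  assert (Ea : dot a a = t * dot y a + (1 - t) * dot z a)
    by (rewrite Ha at 1; unfold dot, padd, pscale; simpl; ring).
  rewrite H1 in Ea. pose proof (Le1 y Ky). pose proof (Le1 z Kz).
  rewrite (Eq1 y Ky), (Eq1 z Kz); [reflexivity | nra ..].
Qed.

Lemma in_E_eqframe a b c : sqnorm a = 1 -> sqnorm b = 1 -> sqnorm c = 1 -> a <> b ->
  dist2 a b = dist2 b c -> dist2 b c = dist2 c a -> eqframe a b c.
Proof.
  destruct a as [a1 a2], b as [b1 b2], c as [c1 c2];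
    unfold sqnorm, dist2, eqframe, dot; simpl.
  intros Ha Hb Hc Hne E1 E2.
  set (k := a1 * b1 + a2 * b2).
  assert (K1 : b1 * c1 + b2 * c2 = k) by (unfold k; nra).
  assert (K2 : c1 * a1 + c2 * a2 = k) by (unfold k; nra).
  (* Gram determinant of three vectors of the plane *)
  assert (G : (a1*a1+a2*a2)*(b1*b1+b2*b2)*(c1*c1+c2*c2)
     + 2*(a1*b1+a2*b2)*(b1*c1+b2*c2)*(c1*a1+c2*a2)
     - (a1*a1+a2*a2)*(b1*c1+b2*c2)*(b1*c1+b2*c2) - (b1*b1+b2*b2)*(c1*a1+c2*a2)*(c1*a1+c2*a2)
     - (c1*c1+c2*c2)*(a1*b1+a2*b2)*(a1*b1+a2*b2) = 0) by ring.
  rewrite Ha, Hb, Hc, K1, K2 in G. fold k in G.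
  assert (Hk1 : k <> 1).
  { intro E. apply Hne. destruct (sqr_sum_eq0 (a1 - b1) (a2 - b2)) as [? ?];
      [unfold k in E; nra|]. f_equal; lra. }
  assert (Hk : k = -1/2).
  { assert (Z : (1 - k) * (1 - k) * (1 + 2 * k) = 0) by nra.
    apply Rmult_integral in Z as [Z|Z]; [|lra].
    exfalso; apply Hk1; nra. }
  destruct (sqr_sum_eq0 (a1 + b1 + c1) (a2 + b2 + c2)) as [S1 S2].
  { transitivity ((a1*a1+a2*a2) + (b1*b1+b2*b2) + (c1*c1+c2*c2)
                  + 2 * k + 2 * (b1*c1+b2*c2) + 2 * (c1*a1+c2*a2)); [unfold k; ring|].
    rewrite Ha, Hb, Hc, K1, K2, Hk. lra. }
  unfold k in Hk; repeat split; lra.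
Qed.

Definition eventually_small (Q : R -> Prop) : Prop :=
  exists e, 0 < e /\ forall h, 0 < h < e -> Q h.

Lemma eventually_small_forall (n : nat) (Q : nat -> R -> Prop) :
  (forall i, (i < n)%nat -> eventually_small (Q i)) ->
  eventually_small (fun h => forall i, (i < n)%nat -> Q i h).
Proof.
  induction n as [|n IH]; intro H.
  - exists 1; split; [lra|intros; lia].
  - destruct IH as [e1 [He1 H1]]; [intros i Hi; apply H; lia|].
    destruct (H n) as [e2 [He2 H2]]; [lia|].
    exists (Rmin e1 e2); split; [apply Rmin_glb_lt; auto|].
    intros h Hh i Hi. pose proof (Rmin_l e1 e2). pose proof (Rmin_r e1 e2).
    destruct (Nat.eq_dec i n) as [->|Hne]; [apply H2; lra|apply H1; [lra|lia]].
Qed.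

Lemma eventually_small_forall2 (n m : nat) (Q : nat -> nat -> R -> Prop) :
  (forall i k, (i < n)%nat -> (k < m)%nat -> eventually_small (Q i k)) ->
  eventually_small (fun h => forall i k, (i < n)%nat -> (k < m)%nat -> Q i k h).
Proof.
  intro H. destruct (eventually_small_forall n (fun i h => forall k, (k < m)%nat -> Q i k h))
    as [e [He H']]; [|exists e; split; auto].
  intros i Hi. apply (eventually_small_forall m (fun k => Q i k)). auto.
Qed.

Lemma eventually_small_sqrt r0 : r0 < 1 -> eventually_small (fun eps => r0 < sqrt (1 - eps) < 1).
Proof.
  intro Hr0. exists (Rmin 1 (1 - r0)). split; [apply Rmin_glb_lt; lra|].
  intros eps [He0 He1]. pose proof (Rmin_l 1 (1 - r0)). pose proof (Rmin_r 1 (1 - r0)).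
  pose proof (sqrt_sqrt (1 - eps) ltac:(lra)). pose proof (sqrt_pos (1 - eps)).
  split; nra.
Qed.

(** * Pushing an edge of a shrunk triangle outwards *)

(* In barycentric coordinates with respect to a frame [a b c], with [d = (xd, yd, -Z)] and
   [rho = (1 - r) / 3], the points [r c], [segpt t (r a) (r d)] and [segpt t (r b) (r d)]
   have first two coordinates [(rho, rho)], [(rho + r (1 - t) + r t xd, rho + r t yd)] and
   [(rho + r t xd, rho + r (1 - t) + r t yd)]. *)
Lemma pushed_triangle_coords r rho t Z xd yd dl p q w :
  0 < r -> r + 3 * rho = 1 -> r * t * Z = rho -> 0 < rho -> t < 1 -> 0 < Z ->
  xd + yd = 1 + Z -> xd <= 1 -> yd <= 1 -> rho * (Z + 1) <= dl * Z ->
  p + q + w = 1 -> dl <= p -> dl <= q -> 0 <= w ->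
  exists al be ga, 0 <= al /\ 0 <= be /\ 0 <= ga /\ al + be + ga = 1 /\
    p = al * rho + be * (rho + r * (1 - t) + r * t * xd) + ga * (rho + r * t * xd) /\
    q = al * rho + be * (rho + r * t * yd) + ga * (rho + r * (1 - t) + r * t * yd).
Proof.
  intros Hr Hr3 Ht Hrho Ht1 HZ Hxy Hx Hy Hdl Hpqw Hp Hq Hw.
  assert (Ht0 : 0 < t).
  { apply (Rmult_lt_reg_l (r * Z)); [nra|]. rewrite Rmult_0_r. rewrite <- Ht in Hrho. lra. }
  assert (Hp' : rho + r * t <= p) by nra.
  assert (Hq' : rho + r * t <= q) by nra.
  set (al := w / (1 - 2 * rho)).
  assert (Hal : 0 <= al <= 1).
  { unfold al. split; [apply Rmult_le_pos; [lra|apply Rlt_le, Rinv_0_lt_compat; nra]|].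
    apply (Rmult_le_reg_r (1 - 2 * rho)); [lra|].
    unfold Rdiv; rewrite Rmult_assoc, Rinv_l; nra. }
  set (S := 1 - al).
  exists al, (((p - rho) / r - S * t * xd) / (1 - t)),
    (((q - rho) / r - S * t * yd) / (1 - t)).
  assert (HS : 0 <= S <= 1) by (unfold S; lra).
  assert (Ex : S * t * xd <= t) by (assert (S * xd <= 1) by nra; nra).
  assert (Ey : S * t * yd <= t) by (assert (S * yd <= 1) by nra; nra).
  assert (Pp : t <= (p - rho) / r).
  { replace t with (r * t / r) by (field; lra).
    apply Rmult_le_compat_r; [apply Rlt_le, Rinv_0_lt_compat|]; lra. }
  assert (Pq : t <= (q - rho) / r).
  { replace t with (r * t / r) by (field; lra).
    apply Rmult_le_compat_r; [apply Rlt_le, Rinv_0_lt_compat|]; lra. }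
  assert (H3 : 0 < 1 + 3 * t * Z) by nra.
  assert (Er : r = 1 / (1 + 3 * t * Z)) by (field_simplify_eq; nra).
  assert (Erho : rho = t * Z / (1 + 3 * t * Z)) by (rewrite <- Ht, Er; field; lra).
  assert (Ew : w = 1 - p - q) by lra.
  assert (Eyd : yd = 1 + Z - xd) by lra.
  repeat split; try lra.
  - apply Rmult_le_pos; [lra|apply Rlt_le, Rinv_0_lt_compat; lra].
  - apply Rmult_le_pos; [lra|apply Rlt_le, Rinv_0_lt_compat; lra].
  - unfold S, al. rewrite Erho, Er, Ew, Eyd. field. split; nra.
  - unfold S, al. rewrite Erho, Er, Ew, Eyd. field. split; nra.
  - unfold S, al. rewrite Erho, Er, Ew, Eyd. field. split; nra.
Qed.

Definition segpt (t : R) (y z : pt) : pt := padd (pscale (1 - t) y) (pscale t z).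

Lemma pushed_noncollinear a b c xd yd zd r t : eqframe a b c -> xd + yd + zd = 1 ->
  r <> 0 -> t <> 1 -> 1 - t * zd <> 0 ->
  noncollinear (pscale r c) (segpt t (pscale r a) (pscale r (lin3 xd yd zd a b c)))
    (segpt t (pscale r b) (pscale r (lin3 xd yd zd a b c))).
Proof.
  intros F Hs Hr Ht Hz. pose proof (eqframe_det _ _ _ F) as D.
  unfold noncollinear, segpt, padd, pscale, lin3; cbn [fst snd].
  destruct F as [_ [_ [_ [F1 F2]]]].
  replace (fst c) with (- fst a - fst b) by lra. replace (snd c) with (- snd a - snd b) by lra.
  intro E. apply D.
  assert (E' : 3 * (r * r) * (1 - t) * (1 - t * zd) * det2 a b = 0).
  { rewrite <- E. unfold det2. replace xd with (1 - yd - zd) by lra. ring. }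
  apply Rmult_integral in E' as [E'|E']; auto.
  exfalso. repeat (apply Rmult_integral in E' as [E'|E']); try lra; nra.
Qed.

(* [Z > 0] is the barycentric depth of [d] beyond the edge opposite [c]; the relation
   [r t Z = (1 - r) / 3] puts the pushed edge back on the line [dot x c = -1/2]. *)
Lemma pushed_triangle_contains a b c xd yd Z δ r t x : eqframe a b c ->
  xd + yd = 1 + Z -> xd <= 1 -> yd <= 1 -> 0 < Z -> 0 < r < 1 ->
  r * t * Z = (1 - r) / 3 -> t < 1 -> (1 - r) / 3 * (Z + 1) <= 2 * δ / 3 * Z ->
  dot x a + 1/2 >= δ -> dot x b + 1/2 >= δ -> dot x c >= -1/2 ->
  conv3 (pscale r c) (segpt t (pscale r a) (pscale r (lin3 xd yd (- Z) a b c)))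
    (segpt t (pscale r b) (pscale r (lin3 xd yd (- Z) a b c))) x.
Proof.
  intros F Hxy Hxd Hyd HZ Hr Htz Ht1 Hδ Hxa Hxb Hxc.
  pose proof (eqframe_decomp a b c x F) as Dx.
  pose proof (eqframe_dots _ _ _ F) as [_ [_ [_ Hs]]]. specialize (Hs x).
  set (rho := (1 - r) / 3) in *.
  destruct (pushed_triangle_coords r rho t Z xd yd (2 * δ / 3)
    ((1 + 2 * dot x a) / 3) ((1 + 2 * dot x b) / 3) ((1 + 2 * dot x c) / 3))
    as [al [be [ga [H1 [H2 [H3 [H4 [Ep Eq]]]]]]]]; try (unfold rho in *; lra).
  set (p := (1 + 2 * dot x a) / 3) in *. set (q := (1 + 2 * dot x b) / 3) in *.
  set (w := (1 + 2 * dot x c) / 3) in *.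
  assert (Hw : w = 1 - p - q) by (unfold p, q, w; lra).
  clearbody p q w.
  assert (Ht0 : 0 <= t).
  { apply (Rmult_le_reg_l (r * Z)); [nra|].
    replace (r * Z * t) with (r * t * Z) by ring. rewrite Htz, Rmult_0_r. unfold rho; lra. }
  assert (H3t : 0 < 1 + 3 * t * Z) by nra.
  assert (Er : r = 1 / (1 + 3 * t * Z)) by (unfold rho in Htz; field_simplify_eq; nra).
  assert (Erho : rho = t * Z / (1 + 3 * t * Z)) by (rewrite <- Htz, Er; field; lra).
  assert (Eyd : yd = 1 + Z - xd) by lra.
  assert (Ega : ga = 1 - al - be) by lra.
  rewrite conv3_bary. exists al, be, ga. repeat split; auto.
  rewrite Dx. unfold segpt, padd, pscale, lin3. destruct F as [_ [_ [_ [F1 F2]]]].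
  apply pt_eq; cbn [fst snd];
    [replace (fst c) with (- fst a - fst b) by lra | replace (snd c) with (- snd a - snd b) by lra];
    rewrite Hw, Ep, Eq, Ega, Eyd, Erho, Er; field; lra.
Qed.

Lemma pushed_triangle a b c d δ : eqframe a b c -> dot d d = 1 -> dot d c < -1/2 -> 0 < δ ->
  exists r0, r0 < 1 /\ forall r, r0 < r < 1 -> exists t, 0 <= t <= 1 /\
    noncollinear (pscale r c) (segpt t (pscale r a) (pscale r d))
      (segpt t (pscale r b) (pscale r d)) /\
    forall x, dot x a + 1/2 >= δ -> dot x b + 1/2 >= δ -> dot x c >= -1/2 ->
      conv3 (pscale r c) (segpt t (pscale r a) (pscale r d))
        (segpt t (pscale r b) (pscale r d)) x.
Proof.
  intros F Hd Hdc Hδ.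
  pose proof (eqframe_units _ _ _ F) as [Ua [Ub Uc]].
  pose proof (eqframe_dots _ _ _ F) as [_ [_ [_ Hs]]]. pose proof (Hs d) as Sd.
  pose proof (unit_dot_bounds d a Hd Ua). pose proof (unit_dot_bounds d b Hd Ub).
  pose proof (eqframe_decomp a b c d F) as Dd.
  set (xd := (1 + 2 * dot d a) / 3) in *. set (yd := (1 + 2 * dot d b) / 3) in *.
  set (Z := - ((1 + 2 * dot d c) / 3)).
  replace ((1 + 2 * dot d c) / 3) with (- Z) in Dd by (unfold Z; ring).
  assert (Hxy : xd + yd = 1 + Z) by (unfold xd, yd, Z; lra).
  assert (Hxd : xd <= 1) by (unfold xd; lra).
  assert (Hyd : yd <= 1) by (unfold yd; lra).
  assert (HZ : 0 < Z) by (unfold Z; lra).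
  clearbody xd yd Z. rewrite Dd. clear Dd.
  set (m := Rmin (2 * δ / 3 * Z / (Z + 1)) (Z / 2)).
  assert (Hm1 : m <= 2 * δ / 3 * Z / (Z + 1)) by apply Rmin_l.
  assert (Hm2 : m <= Z / 2) by apply Rmin_r.
  assert (Hm : 0 < m) by (apply Rmin_glb_lt; [apply Rdiv_lt_0_compat|]; nra).
  exists (Rmax (1/2) (1 - 3 * m)). split; [apply Rmax_lub_lt; lra|].
  intros r Hr. pose proof (Rmax_l (1/2) (1 - 3 * m)). pose proof (Rmax_r (1/2) (1 - 3 * m)).
  assert (Hrho : (1 - r) / 3 * (Z + 1) <= 2 * δ / 3 * Z).
  { apply (Rle_trans _ (m * (Z + 1))); [nra|].
    replace (2 * δ / 3 * Z) with (2 * δ / 3 * Z / (Z + 1) * (Z + 1)) by (field; lra). nra. }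
  set (t := (1 - r) / 3 / (r * Z)).
  assert (Htz : r * t * Z = (1 - r) / 3) by (unfold t; field; split; lra).
  assert (Ht : 0 <= t < 1).
  { unfold t. split; [apply Rlt_le, Rdiv_lt_0_compat; nra|].
    apply (Rmult_lt_reg_r (r * Z)); [nra|].
    unfold Rdiv; rewrite Rmult_assoc, Rinv_l; nra. }
  exists t. split; [lra|]. split.
  - apply pushed_noncollinear; [exact F|lra|lra|lra|nra].
  - intros x. apply pushed_triangle_contains; auto; lra.
Qed.

(** * Counting *)

Fixpoint count_below (L : list nat) (m : nat) : nat :=
  match m with
  | O => O
  | S m' => (count_below L m' + count_occ Nat.eq_dec L m')%nat
  end.

Lemma count_below_cons x L m :
  count_below (x :: L) m = (count_below L m + (if Nat.ltb x m then 1 else 0))%nat.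
Proof.
  induction m as [|m IH]; simpl; [destruct x; reflexivity|].
  rewrite IH. destruct (Nat.eq_dec x m);
    destruct (Nat.ltb_spec x m); destruct (Nat.ltb_spec x (S m)); lia.
Qed.

Lemma count_below_le L m : (count_below L m <= length L)%nat.
Proof.
  induction L as [|x L IH].
  - induction m; simpl in *; lia.
  - rewrite count_below_cons. simpl. destruct (Nat.ltb x m); lia.
Qed.

Lemma pigeonhole_twice (L : list nat) m : (length L < 2 * m)%nat ->
  exists i, (i < m)%nat /\ (count_occ Nat.eq_dec L i <= 1)%nat.
Proof.
  intro H. apply NNPP; intro Hn.
  assert (G : forall m', (m' <= m)%nat -> (2 * m' <= count_below L m')%nat).
  { induction m' as [|m' IH]; intro Hm; simpl; [lia|].
    assert (2 <= count_occ Nat.eq_dec L m')%nat.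
    { destruct (Nat.le_gt_cases (count_occ Nat.eq_dec L m') 1); auto.
      exfalso; apply Hn; exists m'; split; lia. }
    specialize (IH ltac:(lia)). lia. }
  specialize (G m (le_n _)). pose proof (count_below_le L m). lia.
Qed.

Section Touching.
Variables (A : Type) (touch : A -> nat -> Prop).

Lemma touch_index_list (S' : list A) :
  (forall s, In s S' -> exists i1 i2, forall i, touch s i -> i = i1 \/ i = i2) ->
  exists L, length L = (2 * length S')%nat /\
    (forall s i, In s S' -> touch s i -> In i L) /\
    (forall s s' i, In s S' -> In s' S' -> s <> s' -> touch s i -> touch s' i ->
       (2 <= count_occ Nat.eq_dec L i)%nat).
Proof.
  induction S' as [|x S' IH]; intro H.
  - exists nil. repeat split; simpl; tauto.
  - destruct IH as [L [HL [Hin H2]]]; [intros s Hs; apply H; right; auto|].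
    destruct (H x) as [i1 [i2 Hx]]; [left; auto|].
    exists (i1 :: i2 :: L). split; [simpl; lia|]. split.
    + intros s i [<-|Hs] Ht; [destruct (Hx i Ht) as [->| ->]; simpl; auto|].
      right; right; eauto.
    + assert (Hx1 : forall i, touch x i -> (S (count_occ Nat.eq_dec L i) <=
                                              count_occ Nat.eq_dec (i1 :: i2 :: L) i)%nat).
      { intros i Ht. simpl. destruct (Hx i Ht) as [->| ->];
          repeat destruct (Nat.eq_dec _ _); try congruence; lia. }
      assert (Hmono : forall i, (count_occ Nat.eq_dec L i <=
                                 count_occ Nat.eq_dec (i1 :: i2 :: L) i)%nat).
      { intro i. simpl. destruct (Nat.eq_dec i1 i), (Nat.eq_dec i2 i); lia. }
      assert (HinL : forall i s, In s S' -> touch s i -> (1 <= count_occ Nat.eq_dec L i)%nat).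
      { intros i s Hs Ht. apply count_occ_In. eauto. }
      intros s s' i [<-|Hs] [<-|Hs'] Hne Ht Ht'; try congruence.
      * pose proof (Hx1 i Ht). pose proof (HinL i s' Hs' Ht'). lia.
      * pose proof (Hx1 i Ht'). pose proof (HinL i s Hs Ht). lia.
      * pose proof (H2 s s' i Hs Hs' Hne Ht Ht'). pose proof (Hmono i). lia.
Qed.

Lemma pigeonhole_touch (S' : list A) n :
  (forall s, In s S' -> exists i1 i2, forall i, touch s i -> i = i1 \/ i = i2) ->
  (length S' < n)%nat ->
  exists i, (i < n)%nat /\
    forall s s', In s S' -> In s' S' -> touch s i -> touch s' i -> s = s'.
Proof.
  intros H Hlen. destruct (touch_index_list S' H) as [L [HL [_ H2]]].
  destruct (pigeonhole_twice L n) as [i [Hi Hc]]; [lia|].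
  exists i. split; auto. intros s s' Hs Hs' Ht Ht'.
  apply NNPP; intro Hne. pose proof (H2 s s' i Hs Hs' Hne Ht Ht'). lia.
Qed.

End Touching.

(** * The family of triangles *)

Lemma forall_lt3 (P : nat -> Prop) k : (k < 3)%nat ->
  ((forall l, (l < 3)%nat -> P l) <-> P ((k + 1) mod 3)%nat /\ P ((k + 2) mod 3)%nat /\ P k).
Proof.
  intro Hk. split.
  - intro H. repeat split; apply H; try lia; apply Nat.mod_upper_bound; lia.
  - intros [H1 [H2 H3]] l Hl.
    destruct k as [|[|[|k]]]; try lia; destruct l as [|[|[|l]]]; try lia; auto.
Qed.

Section Family.

Variables (n : nat) (T : nat -> pt -> Prop) (V : nat -> nat -> pt).

Hypothesis T_eqframe : forall i, (i < n)%nat ->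
  eqframe (V i 0%nat) (V i 1%nat) (V i 2%nat) /\
  forall x, T i x <-> conv3 (V i 0%nat) (V i 1%nat) (V i 2%nat) x.

Definition feasible (x : pt) : Prop :=
  forall i k, (i < n)%nat -> (k < 3)%nat -> dot x (V i k) >= -1/2.

Lemma eqframe_V i k : (i < n)%nat -> (k < 3)%nat ->
  eqframe (V i ((k + 1) mod 3)%nat) (V i ((k + 2) mod 3)%nat) (V i k).
Proof.
  intros Hi Hk. destruct (T_eqframe i Hi) as [F _].
  destruct k as [|[|[|k]]]; try lia; simpl; auto using eqframe_rot.
Qed.

Lemma unit_V i k : (i < n)%nat -> (k < 3)%nat -> dot (V i k) (V i k) = 1.
Proof. intros Hi Hk. apply (eqframe_units _ _ _ (eqframe_V i k Hi Hk)). Qed.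

Lemma T_halfplanes i k x : (i < n)%nat -> (k < 3)%nat ->
  T i x <-> halfplanes3 (V i ((k + 1) mod 3)%nat) (V i ((k + 2) mod 3)%nat) (V i k) x.
Proof.
  intros Hi Hk. destruct (T_eqframe i Hi) as [F HT].
  rewrite HT, conv3_eqframe by exact F. unfold halfplanes3.
  rewrite <- (forall_lt3 (fun l => dot x (V i l) >= -1/2) k Hk),
    (forall_lt3 (fun l => dot x (V i l) >= -1/2) 2) by lia.
  reflexivity.
Qed.

Lemma T_dots i x : (i < n)%nat ->
  T i x <-> forall k, (k < 3)%nat -> dot x (V i k) >= -1/2.
Proof.
  intro Hi. rewrite (T_halfplanes i 2 x Hi), (forall_lt3 _ 2) by lia.
  reflexivity.
Qed.

Lemma bigcap_feasible x : bigcap n T x <-> feasible x.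
Proof.
  unfold bigcap, feasible. split.
  - intros H i k Hi Hk. exact (proj1 (T_dots i x Hi) (H i Hi) k Hk).
  - intros H i Hi. apply T_dots; auto.
Qed.

Lemma T_V i k : (i < n)%nat -> (k < 3)%nat -> T i (V i k).
Proof.
  intros Hi Hk. apply (T_halfplanes i k _ Hi Hk).
  pose proof (eqframe_dots _ _ _ (eqframe_V i k Hi Hk)) as [Hc [Hac [Hbc _]]].
  unfold halfplanes3. rewrite !(dot_comm (V i k)). lra.
Qed.

Lemma vertex_T_V i k : (i < n)%nat -> (k < 3)%nat -> vertex (T i) (V i k).
Proof.
  intros Hi Hk.
  pose proof (eqframe_rot _ _ _ (eqframe_rot _ _ _ (eqframe_V i k Hi Hk))) as F.
  apply (vertex_eqframe _ _ _ _ F); [|apply T_V; auto].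
  intros x Hx. apply (T_halfplanes i k x Hi Hk) in Hx. unfold halfplanes3 in *. tauto.
Qed.

Lemma feasible_perturb s e : feasible s ->
  (forall i k, (i < n)%nat -> (k < 3)%nat -> dot s (V i k) = -1/2 -> dot e (V i k) = 0) ->
  eventually_small (fun h => feasible (padd s (pscale h e)) /\ feasible (padd s (pscale (-h) e))).
Proof.
  intros Hs He.
  destruct (eventually_small_forall2 n 3 (fun i k h =>
      dot (padd s (pscale h e)) (V i k) >= -1/2 /\
      dot (padd s (pscale (-h) e)) (V i k) >= -1/2)) as [e0 [He0 H0]].
  - intros i k Hi Hk.
    destruct (Req_dec (dot s (V i k)) (-1/2)) as [A|A].
    + exists 1. split; [lra|]. intros h _. rewrite !dot_padd_scale, (He i k Hi Hk A). lra.
    + specialize (Hs i k Hi Hk). set (de := dot e (V i k)).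
      pose proof (Rabs_pos de). pose proof (Rle_abs de). pose proof (Rle_abs (- de)).
      rewrite Rabs_Ropp in *.
      exists ((dot s (V i k) + 1/2) / (Rabs de + 1)). split.
      * apply Rdiv_lt_0_compat; lra.
      * intros h [Hh1 Hh2]. rewrite !dot_padd_scale. fold de.
        assert (h * (Rabs de + 1) < dot s (V i k) + 1/2).
        { apply (Rmult_lt_compat_r (Rabs de + 1)) in Hh2; [|lra].
          unfold Rdiv in Hh2. rewrite Rmult_assoc, Rinv_l in Hh2; lra. }
        split; nra.
  - exists e0. split; auto. intros h Hh. split; intros i k Hi Hk; apply (H0 h Hh i k Hi Hk).
Qed.

Lemma vertex_two_tight s : vertex (bigcap n T) s ->
  exists i1 k1 i2 k2, (i1 < n)%nat /\ (k1 < 3)%nat /\ (i2 < n)%nat /\ (k2 < 3)%nat /\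
    dot s (V i1 k1) = -1/2 /\ dot s (V i2 k2) = -1/2 /\ det2 (V i1 k1) (V i2 k2) <> 0.
Proof.
  intros [Ks Hext]. rewrite bigcap_feasible in Ks.
  apply NNPP; intro Hno.
  (* otherwise all tight normals are parallel and [s] moves along their common line *)
  assert (Ee : exists e : pt, e <> (0, 0) /\ forall i k, (i < n)%nat -> (k < 3)%nat ->
             dot s (V i k) = -1/2 -> dot e (V i k) = 0).
  { destruct (classic (exists i0 k0, (i0 < n)%nat /\ (k0 < 3)%nat /\ dot s (V i0 k0) = -1/2))
      as [[i0 [k0 [Hi0 [Hk0 A0]]]]|Hn0].
    - exists (- snd (V i0 k0), fst (V i0 k0)). split.
      + intro E. injection E as E1 E2. pose proof (unit_V i0 k0 Hi0 Hk0) as U.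
        unfold dot in U. nra.
      + intros i k Hi Hk A.
        destruct (Req_dec (det2 (V i0 k0) (V i k)) 0) as [Z|Z].
        * unfold det2 in Z; unfold dot; simpl. lra.
        * exfalso. apply Hno. exists i0, k0, i, k. repeat split; auto.
    - exists (1, 0). split; [intro E; injection E; lra|].
      intros i k Hi Hk A. exfalso. apply Hn0. exists i, k; auto. }
  destruct Ee as [e [He Hea]].
  destruct (feasible_perturb s e Ks Hea) as [e0 [He0 H0]].
  destruct (H0 (e0 / 2) ltac:(lra)) as [Ky Kz].
  rewrite <- bigcap_feasible in Ky, Kz.
  assert (E : padd s (pscale (e0 / 2) e) = padd s (pscale (- (e0 / 2)) e)).
  { apply (Hext _ _ (1/2) Ky Kz); [lra|].
    apply pt_eq; unfold padd, pscale; simpl; field. }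
  apply He. destruct e as [e1 e2]. unfold padd, pscale in E; simpl in E.
  injection E as E1 E2. f_equal; nra.
Qed.

Lemma vertex_slack_gap : exists δ, 0 < δ /\
  forall s, vertex (bigcap n T) s -> forall i k, (i < n)%nat -> (k < 3)%nat ->
    dot s (V i k) + 1/2 = 0 \/ dot s (V i k) + 1/2 >= δ.
Proof.
  set (gap i k i1 k1 i2 k2 h := forall s, feasible s ->
    dot s (V i1 k1) = -1/2 -> dot s (V i2 k2) = -1/2 -> det2 (V i1 k1) (V i2 k2) <> 0 ->
    dot s (V i k) + 1/2 = 0 \/ dot s (V i k) + 1/2 >= h).
  (* two independent tight constraints determine the point, so each slack takes
     finitely many values at the vertices *)
  assert (G : forall i k i1 k1 i2 k2, (i < n)%nat -> (k < 3)%nat ->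
            eventually_small (gap i k i1 k1 i2 k2)).
  { intros i k i1 k1 i2 k2 Hi Hk.
    destruct (classic (exists s0, feasible s0 /\ dot s0 (V i1 k1) = -1/2 /\
                 dot s0 (V i2 k2) = -1/2 /\ det2 (V i1 k1) (V i2 k2) <> 0))
      as [[s0 [K0 [A1 [A2 D0]]]]|Hno].
    - assert (Eq : forall s, dot s (V i1 k1) = -1/2 -> dot s (V i2 k2) = -1/2 -> s = s0)
        by (intros s B1 B2; apply (dot2_inj _ _ s s0 D0); congruence).
      specialize (K0 i k Hi Hk).
      destruct (Req_dec (dot s0 (V i k) + 1/2) 0) as [Z|Z].
      + exists 1; split; [lra|]. intros h _ s _ B1 B2 _. left. rewrite (Eq s B1 B2); auto.
      + exists (dot s0 (V i k) + 1/2). split; [lra|].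
        intros h Hh s _ B1 B2 _. right. rewrite (Eq s B1 B2). lra.
    - exists 1; split; [lra|]. intros h _ s Ks B1 B2 D. exfalso. apply Hno. exists s; auto. }
  assert (E : eventually_small (fun h => forall i k, (i < n)%nat -> (k < 3)%nat ->
             forall i1 k1, (i1 < n)%nat -> (k1 < 3)%nat ->
             forall i2 k2, (i2 < n)%nat -> (k2 < 3)%nat -> gap i k i1 k1 i2 k2 h)).
  { apply eventually_small_forall2; intros i k Hi Hk.
    apply eventually_small_forall2; intros i1 k1 Hi1 Hk1.
    apply eventually_small_forall2; intros i2 k2 Hi2 Hk2. auto. }
  destruct E as [e [He HE]]. exists (e / 2). split; [lra|].
  intros s Hs i k Hi Hk.
  destruct (vertex_two_tight s Hs) as [i1 [k1 [i2 [k2 [Hi1 [Hk1 [Hi2 [Hk2 [A1 [A2 D]]]]]]]]]].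
  destruct Hs as [Ks _]. rewrite bigcap_feasible in Ks.
  exact (HE (e / 2) ltac:(lra) i k Hi Hk i1 k1 Hi1 Hk1 i2 k2 Hi2 Hk2 s Ks A1 A2 D).
Qed.

Hypothesis T_distinct : forall i j, (i < n)%nat -> (j < n)%nat -> i <> j ->
  ~ (forall x, T i x <-> T j x).

Lemma V_outside_T i j k : (i < n)%nat -> (j < n)%nat -> i <> j -> (k < 3)%nat ->
  exists l, (l < 3)%nat /\ dot (V i k) (V j l) < -1/2.
Proof.
  intros Hi Hj Hij Hk. apply NNPP; intro Hno. apply (T_distinct i j Hi Hj Hij). intro x.
  rewrite (T_halfplanes i k x Hi Hk), (T_halfplanes j 2 x Hj) by lia.
  apply eqframe_halfplanes_eq; [apply eqframe_V; auto|apply eqframe_V; auto; lia|].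
  rewrite <- (T_halfplanes j 2 _ Hj) by lia. apply T_dots; auto.
  intros l Hl. apply Rnot_lt_ge. intro Hlt. apply Hno. eauto.
Qed.

Lemma V_inj_triangle i j k l : (i < n)%nat -> (j < n)%nat -> (k < 3)%nat -> (l < 3)%nat ->
  V i k = V j l -> i = j.
Proof.
  intros Hi Hj Hk Hl E. apply NNPP; intro Hij.
  destruct (V_outside_T i j k Hi Hj Hij Hk) as [l' [Hl' Hlt]].
  rewrite E in Hlt. apply (proj1 (T_dots j _ Hj) (T_V j l Hj Hl) l') in Hl'. lra.
Qed.

Lemma vertex_touches_two s : vertex (bigcap n T) s ->
  exists i1 i2, forall i, ((i < n)%nat /\ exists l, (l < 3)%nat /\ dot s (V i l) = -1/2) ->
    i = i1 \/ i = i2.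
Proof.
  intro Hs.
  destruct (vertex_two_tight s Hs) as [i1 [k1 [i2 [k2 [Hi1 [Hk1 [Hi2 [Hk2 [A1 [A2 Dt]]]]]]]]]].
  exists i1, i2. intros i [Hi [l [Hl A]]].
  destruct (tight_unit_normals _ _ _ s Dt (unit_V i1 k1 Hi1 Hk1) (unit_V i2 k2 Hi2 Hk2)
     (unit_V i l Hi Hl) A1 A2 A) as [E|E];
    [left; apply (V_inj_triangle i i1 l k1) | right; apply (V_inj_triangle i i2 l k2)]; auto.
Qed.

Hypothesis n_ge2 : (2 <= n)%nat.

Lemma other_index i : (i < n)%nat -> exists j, (j < n)%nat /\ i <> j.
Proof. intro. destruct i; [exists 1%nat|exists 0%nat]; lia. Qed.

Lemma feasible_one_edge s i k1 k2 : feasible s -> (i < n)%nat -> (k1 < 3)%nat -> (k2 < 3)%nat ->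
  dot s (V i k1) = -1/2 -> dot s (V i k2) = -1/2 -> k1 = k2.
Proof.
  intros Hs Hi Hk1 Hk2 E1 E2. apply NNPP; intro Hne.
  (* [s] would be the third vertex of [T i], which lies outside the other triangles *)
  assert (Hv : exists k, (k < 3)%nat /\ s = V i k).
  { destruct k1 as [|[|[|k1]]]; destruct k2 as [|[|[|k2]]]; try lia;
      [exists 2%nat | exists 1%nat | exists 2%nat | exists 0%nat | exists 1%nat | exists 0%nat];
      (split; [lia|]);
      match goal with |- s = V i ?k =>
        pose proof (eqframe_V i k Hi ltac:(lia)) as F; simpl in F;
        first [ exact (eqframe_tight2 _ _ _ s F E1 E2)
              | exact (eqframe_tight2 _ _ _ s (eqframe_swap _ _ _ F) E1 E2) ]
      end. }
  destruct Hv as [k [Hk ->]]. destruct (other_index i Hi) as [j [Hj Hij]].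
  destruct (V_outside_T i j k Hi Hj Hij Hk) as [l [Hl Hlt]].
  specialize (Hs j l Hj Hl). lra.
Qed.

Lemma triangle_touched_on_one_edge (S' : list pt) :
  (forall s, In s S' -> vertex (bigcap n T) s) -> (length S' < n)%nat ->
  exists i k, (i < n)%nat /\ (k < 3)%nat /\
    forall s, In s S' -> forall l, (l < 3)%nat -> dot s (V i l) = -1/2 -> l = k.
Proof.
  intros HS Hlen.
  destruct (pigeonhole_touch pt
    (fun s i => (i < n)%nat /\ exists l, (l < 3)%nat /\ dot s (V i l) = -1/2) S' n)
    as [i [Hi Huniq]]; auto using vertex_touches_two.
  destruct (classic (exists s0 l0, In s0 S' /\ (l0 < 3)%nat /\ dot s0 (V i l0) = -1/2))
    as [[s0 [l0 [Hs0 [Hl0 A0]]]]|Hno].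
  - exists i, l0. repeat split; auto. intros s Hs l Hl A.
    assert (s = s0) as -> by (apply Huniq; eauto 6).
    destruct (HS s0 Hs0) as [Ks _]. rewrite bigcap_feasible in Ks.
    apply (feasible_one_edge s0 i l l0); auto.
  - exists i, 0%nat. split; [exact Hi|split; [lia|]].
    intros s Hs l Hl A. exfalso. apply Hno. exists s, l; auto.
Qed.

Lemma triangle_with_margin (S' : list pt) δ :
  (forall s, vertex (bigcap n T) s -> forall i k, (i < n)%nat -> (k < 3)%nat ->
     dot s (V i k) + 1/2 = 0 \/ dot s (V i k) + 1/2 >= δ) ->
  (forall s, In s S' -> vertex (bigcap n T) s) -> (length S' < n)%nat ->
  exists i k, (i < n)%nat /\ (k < 3)%nat /\ forall s, In s S' ->
    dot s (V i ((k + 1) mod 3)%nat) + 1/2 >= δ /\ dot s (V i ((k + 2) mod 3)%nat) + 1/2 >= δ /\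
    dot s (V i k) >= -1/2.
Proof.
  intros Hgap HS Hlen. destruct (triangle_touched_on_one_edge S' HS Hlen) as [i [k [Hi [Hk Hq]]]].
  exists i, k. split; [exact Hi|split; [exact Hk|]]. intros s Hs.
  pose proof (HS s Hs) as Hv. destruct Hv as [Ks _]. rewrite bigcap_feasible in Ks.
  assert (Side : forall l, (l < 3)%nat -> l <> k -> dot s (V i l) + 1/2 >= δ).
  { intros l Hl Hlk. destruct (Hgap s (HS s Hs) i l Hi Hl) as [Z|Z]; auto.
    exfalso. apply Hlk, (Hq s Hs); auto; lra. }
  repeat split; auto; apply Side;
    try (apply Nat.mod_upper_bound; lia); destruct k as [|[|[|k]]]; simpl; lia.
Qed.

Lemma replacement_triangle δ i k : 0 < δ -> (i < n)%nat -> (k < 3)%nat ->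
  eventually_small (fun eps => exists P1 P2 P3, noncollinear P1 P2 P3 /\
    (forall x, conv3 P1 P2 P3 x -> hullP n T eps x) /\
    forall x, dot x (V i ((k + 1) mod 3)%nat) + 1/2 >= δ ->
      dot x (V i ((k + 2) mod 3)%nat) + 1/2 >= δ -> dot x (V i k) >= -1/2 ->
      conv3 P1 P2 P3 x).
Proof.
  intros Hδ Hi Hk. destruct (other_index i Hi) as [j [Hj Hij]].
  destruct (V_outside_T i j k Hi Hj Hij Hk) as [l [Hl Hout]].
  destruct (pushed_triangle _ _ _ (V j l) δ (eqframe_V i k Hi Hk) (unit_V j l Hj Hl))
    as [r0 [Hr0 Hpush]]; [rewrite dot_comm; exact Hout|exact Hδ|].
  destruct (eventually_small_sqrt r0 Hr0) as [e [He Hsqrt]].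
  exists e. split; [exact He|]. intros eps Heps.
  destruct (Hpush _ (Hsqrt eps Heps)) as [t [Ht [Hnc Hin]]].
  do 3 eexists. split; [exact Hnc|]. split; [|exact Hin].
  assert (Hhull : forall i' k', (i' < n)%nat -> (k' < 3)%nat ->
    (fun y => exists i, (i < n)%nat /\ scaled_vertex eps (T i) y)
      (pscale (sqrt (1 - eps)) (V i' k'))).
  { intros i' k' Hi' Hk'. exists i'. split; [exact Hi'|].
    exists (V i' k'). split; [apply vertex_T_V|]; auto. }
  intros x Hx. apply (conv_conv _ _ x) with (2 := Hx).
  assert (M1 : ((k + 1) mod 3 < 3)%nat) by (apply Nat.mod_upper_bound; lia).
  assert (M2 : ((k + 2) mod 3 < 3)%nat) by (apply Nat.mod_upper_bound; lia).
  intros y [->|[->| ->]]; [apply conv_in|apply conv_segment..]; auto.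
Qed.

End Family.

Lemma eqframes_exist n (T : nat -> pt -> Prop) : (forall i, (i < n)%nat -> in_E (T i)) ->
  exists V : nat -> nat -> pt, forall i, (i < n)%nat ->
    eqframe (V i 0%nat) (V i 1%nat) (V i 2%nat) /\
    forall x, T i x <-> conv3 (V i 0%nat) (V i 1%nat) (V i 2%nat) x.
Proof.
  intro HE.
  assert (H : forall i, exists abc : pt * pt * pt, (i < n)%nat ->
     eqframe (fst (fst abc)) (snd (fst abc)) (snd abc) /\
     forall x, T i x <-> conv3 (fst (fst abc)) (snd (fst abc)) (snd abc) x).
  { intro i. destruct (Nat.lt_ge_cases i n) as [Hi|Hi].
    - destruct (HE i Hi) as [a [b [c [H1 [H2 [H3 [H4 [H5 [H6 H7]]]]]]]]].
      exists (a, b, c); intros _; simpl. split; auto. apply in_E_eqframe; auto.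
    - exists (pzero, pzero, pzero). lia. }
  exists (fun i k => let abc := proj1_sig (constructive_indefinite_description _ (H i)) in
     match k with O => fst (fst abc) | 1%nat => snd (fst abc) | _ => snd abc end).
  intros i Hi. simpl.
  destruct (constructive_indefinite_description _ (H i)) as [abc Habc]. simpl. auto.
Qed.

Theorem mainTheorem14 (n : nat) (T : nat -> pt -> Prop) :
  (2 <= n)%nat ->
  (forall i, (i < n)%nat -> in_E (T i)) ->
  (forall i j, (i < n)%nat -> (j < n)%nat -> i <> j ->
     ~ (forall x, T i x <-> T j x)) ->
  exists eps0 : R, 0 < eps0 /\
    forall eps : R, 0 < eps < eps0 ->
      forall S' : list pt,
        NoDup S' ->
        (forall s, In s S' -> vertex (bigcap n T) s) ->
        (length S' < n)%nat ->
        yes_instance (hullP n T eps) S'.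
Proof.
  intros Hn HE Hdist.
  destruct (eqframes_exist n T HE) as [V HV].
  destruct (vertex_slack_gap n T V HV) as [δ [Hδ Hgap]].
  destruct (eventually_small_forall2 n 3 _
    (fun i k => replacement_triangle n T V HV Hdist Hn δ i k Hδ)) as [e [He Hrep]].
  exists e. split; [exact He|]. intros eps Heps S' _ HS Hlen.
  destruct (triangle_with_margin n T V HV Hdist Hn S' δ Hgap HS Hlen) as [i [k [Hi [Hk Hreg]]]].
  destruct (Hrep eps Heps i k Hi Hk) as [P1 [P2 [P3 [Hnc [Hhull Hcov]]]]].
  exists (conv3 P1 P2 P3). split; [|split].
  - exists P1, P2, P3. split; [exact Hnc|reflexivity].
  - intros s Hs. destruct (Hreg s Hs) as [H1 [H2 H3]]. auto.
  - exact Hhull.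
Qed.
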